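(* Let $\phi$ be a quantum channel on $\mathcal M(d;\mathbb C)$, and let $\mathcal G_\phi$ be the (nonempty) set of limit points of the sequence $(\phi^n)_{n\in\mathbb N}$. Then either every element of $\mathcal G_\phi$ is entanglement-breaking, or no element of $\mathcal G_\phi$ is entanglement-breaking.
   Context: A quantum channel is a completely positive, trace-preserving linear map on $\mathcal M(d;\mathbb C)$; $\phi^n$ is its $n$-fold composition. A channel $\psi$ is entanglement-breaking if $(\psi\otimes I)(\rho)$ is separable for every bipartite state $\rho$. *)

From Stdlib Require Import Reals.
Open Scope R_scope.

Record C : Type := mkC { Re : R; Im : R }.

Definition C0 : C := mkC 0 0.
Definition C1 : C := mkC 1 0.
Definition RtoC (x : R) : C := mkC x 0.
Definition Cadd (z w : C) : C := mkC (Re z + Re w) (Im z + Im w).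
Definition Csub (z w : C) : C := mkC (Re z - Re w) (Im z - Im w).
Definition Cmul (z w : C) : C :=
  mkC (Re z * Re w - Im z * Im w) (Re z * Im w + Im z * Re w).
Definition Cconj (z : C) : C := mkC (Re z) (- Im z).
Definition Cmod (z : C) : R := sqrt (Re z * Re z + Im z * Im z).

Fixpoint Csum (n : nat) (f : nat -> C) : C :=
  match n with
  | O => C0
  | S n' => Cadd (Csum n' f) (f n')
  end.

Fixpoint Rsum (n : nat) (f : nat -> R) : R :=
  match n with
  | O => 0
  | S n' => Rsum n' f + f n'
  end.

Definition delta (i j : nat) : C := if Nat.eqb i j then C1 else C0.

(* A d x d complex matrix is a function of its row and column index; only the
   entries with indices < d are ever used. *)
Definition Mat := nat -> nat -> C.

(* A matrix on C^d (x) C^m, with entry X a al b be = <a,al| X |b,be>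
   (a, b < d index the first factor, al, be < m the second). *)
Definition BiMat := nat -> nat -> nat -> nat -> C.

Definition trace (d : nat) (A : Mat) : C := Csum d (fun i => A i i).

Definition bitrace (d m : nat) (X : BiMat) : C :=
  Csum d (fun a => Csum m (fun al => X a al a al)).

Definition psd (d : nat) (A : Mat) : Prop :=
  forall v : nat -> C,
    let q := Csum d (fun i => Csum d (fun j => Cmul (Cconj (v i)) (Cmul (A i j) (v j)))) in
    Im q = 0 /\ 0 <= Re q.

Definition bipsd (d m : nat) (X : BiMat) : Prop :=
  forall v : nat -> nat -> C,
    let q := Csum d (fun a => Csum m (fun al => Csum d (fun b => Csum m (fun be =>
               Cmul (Cconj (v a al)) (Cmul (X a al b be) (v b be)))))) in
    Im q = 0 /\ 0 <= Re q.

Definition state (d : nat) (A : Mat) : Prop := psd d A /\ trace d A = C1.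
Definition bistate (d m : nat) (X : BiMat) : Prop := bipsd d m X /\ bitrace d m X = C1.

(* Every linear map on M(d;C) is given in coordinates by an array K with
   (phi A)_{kl} = sum_{i,j<d} K k l i j * A_{ij}, i.e. K k l i j = (phi E_ij)_{kl}.
   Only indices < d matter. *)
Definition Superop := nat -> nat -> nat -> nat -> C.

Definition apply (d : nat) (K : Superop) (A : Mat) : Mat :=
  fun k l => Csum d (fun i => Csum d (fun j => Cmul (K k l i j) (A i j))).

Definition apply_tensor_id (d m : nat) (K : Superop) (X : BiMat) : BiMat :=
  fun a al b be => Csum d (fun i => Csum d (fun j => Cmul (K a b i j) (X i al j be))).

Definition idop : Superop := fun k l i j => Cmul (delta k i) (delta l j).

Definition compose (d : nat) (K L : Superop) : Superop :=
  fun k l i j => Csum d (fun p => Csum d (fun q => Cmul (K k l p q) (L p q i j))).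

Fixpoint power (d : nat) (K : Superop) (n : nat) : Superop :=
  match n with
  | O => idop
  | S n' => compose d K (power d K n')
  end.

Definition completely_positive (d : nat) (K : Superop) : Prop :=
  forall (m : nat) (X : BiMat), bipsd d m X -> bipsd d m (apply_tensor_id d m K X).

Definition trace_preserving (d : nat) (K : Superop) : Prop :=
  forall A : Mat, trace d (apply d K A) = trace d A.

Definition quantum_channel (d : nat) (K : Superop) : Prop :=
  completely_positive d K /\ trace_preserving d K.

Definition separable (d m : nat) (X : BiMat) : Prop :=
  exists (n : nat) (p : nat -> R) (rho sigma : nat -> Mat),
    (forall t, (t < n)%nat -> 0 <= p t /\ state d (rho t) /\ state m (sigma t)) /\
    Rsum n p = 1 /\
    (forall a al b be, (a < d)%nat -> (al < m)%nat -> (b < d)%nat -> (be < m)%nat ->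
       X a al b be = Csum n (fun t => Cmul (RtoC (p t)) (Cmul (rho t a b) (sigma t al be)))).

Definition entanglement_breaking (d : nat) (K : Superop) : Prop :=
  forall (m : nat) (X : BiMat), bistate d m X -> separable d m (apply_tensor_id d m K X).

(* psi is a limit point (cluster point) of the sequence (phi^n)_n, in the
   (finite-dimensional, hence norm-independent) topology of linear maps on M(d;C) *)
Definition limit_point (d : nat) (K L : Superop) : Prop :=
  forall (eps : R), 0 < eps -> forall N : nat, exists n : nat, (N <= n)%nat /\
    forall k l i j, (k < d)%nat -> (l < d)%nat -> (i < d)%nat -> (j < d)%nat ->
      Cmod (Csub (power d K n k l i j) (L k l i j)) < eps.

(* Let L1, L2 be limit points of (phi^n), say phi^(n_k) -> L1 and phi^(m_k) -> L2
   with m_k >= n_k.  The maps phi^(m_k - n_k) are positive and trace-preserving,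
   so their entries are uniformly bounded and a subsequence converges to some M,
   again positive and trace-preserving.  Passing to the limit in
   phi^(m_k) = phi^(m_k - n_k) o phi^(n_k) gives L2 = M o L1.  If L1 is
   entanglement-breaking, (L1 (x) I)(rho) = sum_t p_t rho_t (x) sigma_t, hence
   (L2 (x) I)(rho) = sum_t p_t M(rho_t) (x) sigma_t is separable; positivity of M
   alone (not complete positivity) is enough here. *)

From Pilot Require Import Defs.
From Stdlib Require Import Reals Lra Lia List ZArith ClassicalEpsilon Rtopology.
(* Reals exports the binomial coefficient [C]; re-importing Defs makes [C] the complex type again. *)
Import Defs.
Open Scope R_scope.

(** * Complex arithmetic and finite sums *)

Lemma Cext (z w : C) : Re z = Re w -> Im z = Im w -> z = w.
Proof. destruct z, w; simpl; intros; subst; auto. Qed.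

Ltac Cunfold := unfold Cmul, Cadd, Csub, Cconj, C0, C1, RtoC in *; simpl in *.
Ltac cring := apply Cext; Cunfold; ring.

Lemma Csum_ext n f g : (forall i, (i < n)%nat -> f i = g i) -> Csum n f = Csum n g.
Proof. induction n; intros H; simpl; auto. rewrite IHn, H; auto. Qed.

Lemma Re_Csum n f : Re (Csum n f) = Rsum n (fun i => Re (f i)).
Proof. induction n; simpl; auto. rewrite IHn; auto. Qed.

Lemma Csum_add n f g : Csum n (fun i => Cadd (f i) (g i)) = Cadd (Csum n f) (Csum n g).
Proof. induction n; simpl. cring. rewrite IHn. cring. Qed.

Lemma Csum_sub n f g : Csub (Csum n f) (Csum n g) = Csum n (fun i => Csub (f i) (g i)).
Proof. induction n; simpl. cring. rewrite <- IHn. cring. Qed.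

Lemma Csum_scal_l n c f : Cmul c (Csum n f) = Csum n (fun i => Cmul c (f i)).
Proof. induction n; simpl. cring. rewrite <- IHn. cring. Qed.

Lemma Csum_scal_r n c f : Cmul (Csum n f) c = Csum n (fun i => Cmul (f i) c).
Proof. induction n; simpl. cring. rewrite <- IHn. cring. Qed.

Lemma Csum_swap n m (f : nat -> nat -> C) :
  Csum n (fun i => Csum m (fun j => f i j)) = Csum m (fun j => Csum n (fun i => f i j)).
Proof.
  induction n; simpl.
  - induction m; simpl; auto. rewrite <- IHm. cring.
  - rewrite IHn, <- Csum_add. auto.
Qed.

Lemma Csum_zero n f : (forall i, (i < n)%nat -> f i = C0) -> Csum n f = C0.
Proof. induction n; intros H; simpl; auto. rewrite IHn, H; auto. cring. Qed.

Lemma Csum_single n k f : (k < n)%nat -> (forall i, (i < n)%nat -> i <> k -> f i = C0) ->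
  Csum n f = f k.
Proof.
  induction n; intros Hk H; [lia|]. simpl.
  destruct (Nat.eq_dec k n) as [->|Hne].
  - rewrite Csum_zero. cring. intros i Hi. apply H; lia.
  - rewrite IHn by (auto; lia). rewrite (H n) by lia. cring.
Qed.

Lemma Csum_two n k l f : (k < n)%nat -> (l < n)%nat -> k <> l ->
  (forall i, (i < n)%nat -> i <> k -> i <> l -> f i = C0) ->
  Csum n f = Cadd (f k) (f l).
Proof.
  induction n; intros Hk Hl Hkl H; [lia|]. simpl.
  destruct (Nat.eq_dec k n) as [->|Hne].
  - rewrite (Csum_single n l) by (auto; try lia; intros; apply H; lia). cring.
  - destruct (Nat.eq_dec l n) as [->|Hne2].
    + rewrite (Csum_single n k) by (auto; try lia; intros; apply H; lia). auto.
    + rewrite IHn by (auto; try lia). rewrite (H n) by lia. cring.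
Qed.

Lemma Rsum_le n f g : (forall i, (i < n)%nat -> f i <= g i) -> Rsum n f <= Rsum n g.
Proof. induction n; intros H; simpl; [lra|]. pose proof (H n ltac:(lia)). pose proof (IHn ltac:(auto)). lra. Qed.

Lemma Rsum_const n c : Rsum n (fun _ => c) = INR n * c.
Proof. induction n; simpl Rsum; [simpl; ring|]. rewrite IHn, S_INR. ring. Qed.

Lemma Rsum_scal n c f : Rsum n (fun i => c * f i) = c * Rsum n f.
Proof. induction n; simpl; [ring|]. rewrite IHn. ring. Qed.

Lemma Rsum_term n f k : (k < n)%nat -> (forall i, (i < n)%nat -> 0 <= f i) -> f k <= Rsum n f.
Proof.
  induction n; intros Hk H; [lia|]. simpl.
  assert (Hpos : 0 <= Rsum n f).
  { rewrite <- (Rmult_0_r (INR n)), <- Rsum_const. apply Rsum_le. auto. }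
  destruct (Nat.eq_dec k n) as [->|Hne].
  - lra.
  - pose proof (IHn ltac:(lia) ltac:(auto)). pose proof (H n ltac:(lia)). lra.
Qed.

(* |Re z| + |Im z| is equivalent to Cmod but needs no square roots. *)
Definition Cnorm1 (z : C) : R := Rabs (Re z) + Rabs (Im z).

Lemma Cnorm1_ge0 z : 0 <= Cnorm1 z.
Proof. unfold Cnorm1. pose proof (Rabs_pos (Re z)). pose proof (Rabs_pos (Im z)). lra. Qed.

Lemma Rabs_Re_le_Cnorm1 z : Rabs (Re z) <= Cnorm1 z.
Proof. unfold Cnorm1. pose proof (Rabs_pos (Im z)). lra. Qed.

Lemma Rabs_Im_le_Cnorm1 z : Rabs (Im z) <= Cnorm1 z.
Proof. unfold Cnorm1. pose proof (Rabs_pos (Re z)). lra. Qed.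

Lemma Cnorm1_add z w : Cnorm1 (Cadd z w) <= Cnorm1 z + Cnorm1 w.
Proof.
  unfold Cnorm1; Cunfold.
  pose proof (Rabs_triang (Re z) (Re w)). pose proof (Rabs_triang (Im z) (Im w)). lra.
Qed.

Lemma Cnorm1_mul z w : Cnorm1 (Cmul z w) <= Cnorm1 z * Cnorm1 w.
Proof.
  unfold Cnorm1; Cunfold. destruct z as [a b], w as [c e]; simpl.
  unfold Rminus. pose proof (Rabs_triang (a*c) (-(b*e))). pose proof (Rabs_triang (a*e) (b*c)).
  rewrite Rabs_Ropp in H. rewrite !Rabs_mult in *.
  pose proof (Rabs_pos a). pose proof (Rabs_pos b). pose proof (Rabs_pos c). pose proof (Rabs_pos e).
  nra.
Qed.

Lemma Cnorm1_Cconj z : Cnorm1 (Cconj z) = Cnorm1 z.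
Proof. unfold Cnorm1; simpl. rewrite Rabs_Ropp. auto. Qed.

Lemma Cnorm1_Csub_sym z w : Cnorm1 (Csub z w) = Cnorm1 (Csub w z).
Proof. unfold Cnorm1; simpl. rewrite (Rabs_minus_sym (Re z)), (Rabs_minus_sym (Im z)). auto. Qed.

Lemma Cnorm1_Csum n f : Cnorm1 (Csum n f) <= Rsum n (fun i => Cnorm1 (f i)).
Proof.
  induction n; simpl. { unfold Cnorm1; simpl; rewrite Rabs_R0; lra. }
  pose proof (Cnorm1_add (Csum n f) (f n)). lra.
Qed.

Lemma Cnorm1_Csum_sub n f g :
  Cnorm1 (Csub (Csum n f) (Csum n g)) <= Rsum n (fun i => Cnorm1 (Csub (f i) (g i))).
Proof. rewrite Csum_sub. apply Cnorm1_Csum. Qed.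

Lemma Cnorm1_le_Cmod z : Cnorm1 z <= 2 * Cmod z.
Proof.
  unfold Cmod, Cnorm1.
  assert (Rabs (Re z) <= sqrt (Re z * Re z + Im z * Im z)).
  { rewrite <- sqrt_Rsqr_abs. apply sqrt_le_1_alt. unfold Rsqr. nra. }
  assert (Rabs (Im z) <= sqrt (Re z * Re z + Im z * Im z)).
  { rewrite <- sqrt_Rsqr_abs. apply sqrt_le_1_alt. unfold Rsqr. nra. }
  lra.
Qed.

Lemma Cnorm1_Csub_le0 z w : Cnorm1 (Csub z w) <= 0 -> z = w.
Proof.
  unfold Cnorm1; simpl. intros H.
  pose proof (Rabs_pos (Re z - Re w)). pose proof (Rabs_pos (Im z - Im w)).
  apply Cext; apply cond_eq; intros; lra.
Qed.

Lemma Rle0_of_small a c : (forall dl, 0 < dl -> a <= dl * c) -> a <= 0.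
Proof.
  intros H. apply Rnot_lt_le. intros Ha.
  destruct (Rle_dec c 0).
  - pose proof (H 1 ltac:(lra)). lra.
  - pose proof (H (a / (2 * c)) ltac:(apply Rdiv_lt_0_compat; lra)).
    replace (a / (2 * c) * c) with (a / 2) in H0 by (field; lra). lra.
Qed.

Lemma inv_pos t : 0 < / INR (S t).
Proof. apply Rinv_0_lt_compat, lt_0_INR. lia. Qed.

Lemma inv_small eta : 0 < eta -> exists T, forall t, (T <= t)%nat -> / INR (S t) <= eta.
Proof.
  intros He. destruct (archimed (/ eta)) as [Ha _].
  assert (Hz : (0 <= up (/ eta))%Z).
  { apply le_IZR. pose proof (Rinv_0_lt_compat eta He). lra. }
  exists (Z.to_nat (up (/ eta))). intros t Ht.
  assert (INR (S t) > / eta).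
  { rewrite S_INR. apply le_INR in Ht. rewrite INR_IZR_INZ, Z2Nat.id in Ht by auto. lra. }
  assert (0 < / eta) by (apply Rinv_0_lt_compat; lra).
  replace eta with (/ / eta) by (field; lra).
  apply Rlt_le, Rinv_lt_contravar; [apply Rmult_lt_0_compat|]; lra.
Qed.

Lemma Csum2_mul_Csum2 d (a : nat -> nat -> C) (b : nat -> nat -> nat -> nat -> C)
  (x : nat -> nat -> C) :
  Csum d (fun i => Csum d (fun j =>
    Cmul (Csum d (fun p => Csum d (fun q => Cmul (a p q) (b p q i j)))) (x i j)))
  = Csum d (fun p => Csum d (fun q =>
    Cmul (a p q) (Csum d (fun i => Csum d (fun j => Cmul (b p q i j) (x i j)))))).
Proof.
  set (F := fun i j p q => Cmul (a p q) (Cmul (b p q i j) (x i j))).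
  transitivity (Csum d (fun i => Csum d (fun j => Csum d (fun p => Csum d (F i j p))))).
  { apply Csum_ext; intros i _. apply Csum_ext; intros j _. rewrite Csum_scal_r.
    apply Csum_ext; intros p _. rewrite Csum_scal_r. apply Csum_ext; intros q _.
    unfold F. cring. }
  transitivity (Csum d (fun p => Csum d (fun q => Csum d (fun i => Csum d (fun j => F i j p q))))).
  { transitivity (Csum d (fun i => Csum d (fun p => Csum d (fun q => Csum d (fun j => F i j p q))))).
    - apply Csum_ext; intros i _. rewrite Csum_swap. apply Csum_ext; intros p _.
      apply Csum_swap.
    - rewrite Csum_swap. apply Csum_ext; intros p _. apply Csum_swap. }
  apply Csum_ext; intros p _. apply Csum_ext; intros q _. rewrite Csum_scal_l.
  apply Csum_ext; intros i _. rewrite Csum_scal_l. auto.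
Qed.

Lemma apply_compose d K L A k l :
  apply d (compose d K L) A k l = apply d K (apply d L A) k l.
Proof. apply Csum2_mul_Csum2. Qed.

Lemma compose_assoc d K L N k l i j :
  compose d (compose d K L) N k l i j = compose d K (compose d L N) k l i j.
Proof. apply (Csum2_mul_Csum2 d (K k l) L (fun p q => N p q i j)). Qed.

Lemma apply_tensor_id_compose d m K L X a al b be :
  apply_tensor_id d m (compose d K L) X a al b be =
  apply_tensor_id d m K (apply_tensor_id d m L X) a al b be.
Proof. apply (Csum2_mul_Csum2 d (K a b) L (fun i j => X i al j be)). Qed.

Lemma delta_refl i : delta i i = C1.
Proof. unfold delta. rewrite Nat.eqb_refl. auto. Qed.

Lemma delta_neq i j : i <> j -> delta i j = C0.
Proof. intros H. unfold delta. apply Nat.eqb_neq in H. rewrite H. auto. Qed.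

Lemma Csum2_delta d k l (f : nat -> nat -> C) : (k < d)%nat -> (l < d)%nat ->
  Csum d (fun i => Csum d (fun j => Cmul (Cmul (delta k i) (delta l j)) (f i j))) = f k l.
Proof.
  intros Hk Hl. rewrite (Csum_single d k); auto.
  - rewrite (Csum_single d l); auto.
    + rewrite !delta_refl. cring.
    + intros j _ Hj. rewrite (delta_neq l j) by congruence. cring.
  - intros i _ Hi. apply Csum_zero. intros j _. rewrite (delta_neq k i) by congruence. cring.
Qed.

Lemma apply_idop d A k l : (k < d)%nat -> (l < d)%nat -> apply d idop A k l = A k l.
Proof. apply Csum2_delta. Qed.

Lemma compose_idop d L k l i j : (k < d)%nat -> (l < d)%nat ->
  compose d idop L k l i j = L k l i j.
Proof. apply (Csum2_delta d k l (fun p q => L p q i j)). Qed.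

Lemma power_add d K a b k l i j : (k < d)%nat -> (l < d)%nat ->
  power d K (a + b) k l i j = compose d (power d K a) (power d K b) k l i j.
Proof.
  revert k l i j. induction a; intros k l i j Hk Hl; simpl.
  - rewrite compose_idop; auto.
  - rewrite compose_assoc. unfold compose at 1 3.
    apply Csum_ext; intros p Hp. apply Csum_ext; intros q Hq. rewrite IHa; auto.
Qed.

(** * Positive trace-preserving maps *)

Definition quad_form d (A : Mat) (v : nat -> C) : C :=
  Csum d (fun i => Csum d (fun j => Cmul (Cconj (v i)) (Cmul (A i j) (v j)))).

Lemma psd_quad_form d A v : psd d A -> Im (quad_form d A v) = 0 /\ 0 <= Re (quad_form d A v).
Proof. intros H. exact (H v). Qed.

Lemma psd_ext d A B : (forall i j, (i < d)%nat -> (j < d)%nat -> A i j = B i j) ->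
  psd d A -> psd d B.
Proof.
  intros H HA v. specialize (HA v). cbv zeta in *.
  erewrite Csum_ext; [exact HA|]. intros i Hi. apply Csum_ext. intros j Hj. rewrite H; auto.
Qed.

Lemma trace_ext d A B : (forall i, (i < d)%nat -> A i i = B i i) -> trace d A = trace d B.
Proof. intros H. apply Csum_ext. auto. Qed.

Definition positive_tp d (K : Superop) : Prop :=
  (forall A, psd d A -> psd d (apply d K A)) /\
  (forall A, trace d (apply d K A) = trace d A).

Lemma positive_tp_idop d : positive_tp d idop.
Proof.
  split.
  - intros A HA. eapply psd_ext; [|exact HA]. intros. rewrite apply_idop; auto.
  - intros A. apply trace_ext. intros. apply apply_idop; auto.
Qed.

Lemma positive_tp_compose d K L :
  positive_tp d K -> positive_tp d L -> positive_tp d (compose d K L).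
Proof.
  intros [HKp HKt] [HLp HLt]. split.
  - intros A HA. eapply psd_ext; [|apply HKp, HLp, HA]. intros. symmetry. apply apply_compose.
  - intros A. rewrite <- (HLt A), <- (HKt (apply d L A)). apply trace_ext. intros.
    apply apply_compose.
Qed.

Lemma Csum_1 f : Csum 1 f = f O.
Proof. simpl. cring. Qed.

(* A channel is positive: view a matrix as a bipartite one with a trivial second factor. *)
Lemma quantum_channel_positive_tp d phi : quantum_channel d phi -> positive_tp d phi.
Proof.
  intros [Hcp Htp]. split; [|exact Htp]. intros A HA.
  assert (HX : bipsd d 1 (fun a _ b _ => A a b)).
  { intros w. specialize (HA (fun i => w i O)). cbv zeta in *.
    erewrite Csum_ext; [exact HA|]. intros a Ha. cbv beta. rewrite Csum_1.
    apply Csum_ext. intros b Hb. rewrite Csum_1. auto. }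
  intros v. specialize (Hcp 1%nat _ HX (fun a _ => v a)). cbv zeta in *.
  erewrite Csum_ext; [exact Hcp|]. intros a Ha. cbv beta. rewrite Csum_1.
  apply Csum_ext. intros b Hb. rewrite Csum_1. auto.
Qed.

Lemma power_positive_tp d phi n : quantum_channel d phi -> positive_tp d (power d phi n).
Proof.
  intros Hq. induction n; simpl.
  - apply positive_tp_idop.
  - apply positive_tp_compose; auto. apply quantum_channel_positive_tp; auto.
Qed.

(** * Entries of a positive trace-preserving map are bounded *)

Definition coord_vec k c : nat -> C := fun a => if Nat.eqb a k then c else C0.

Definition coord_vec2 k l c1 c2 : nat -> C :=
  fun a => if Nat.eqb a k then c1 else if Nat.eqb a l then c2 else C0.

Lemma quad_form_coord_vec d B k c : (k < d)%nat ->
  quad_form d B (coord_vec k c) = Cmul (Cconj c) (Cmul (B k k) c).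
Proof.
  intros Hk. unfold quad_form, coord_vec.
  assert (Hz : forall a, a <> k -> (if Nat.eqb a k then c else C0) = C0).
  { intros a Ha. apply Nat.eqb_neq in Ha. rewrite Ha. auto. }
  rewrite (Csum_single d k); auto.
  - rewrite (Csum_single d k); auto.
    + rewrite Nat.eqb_refl. auto.
    + intros j _ Hj. rewrite (Hz j Hj). cring.
  - intros i _ Hi. apply Csum_zero. intros j _. rewrite (Hz i Hi). cring.
Qed.

Lemma quad_form_coord_vec2 d B k l c1 c2 : (k < d)%nat -> (l < d)%nat -> k <> l ->
  quad_form d B (coord_vec2 k l c1 c2) =
  Cadd (Cadd (Cmul (Cconj c1) (Cmul (B k k) c1)) (Cmul (Cconj c1) (Cmul (B k l) c2)))
       (Cadd (Cmul (Cconj c2) (Cmul (B l k) c1)) (Cmul (Cconj c2) (Cmul (B l l) c2))).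
Proof.
  intros Hk Hl Hkl. unfold quad_form.
  assert (Vk : coord_vec2 k l c1 c2 k = c1).
  { unfold coord_vec2. rewrite Nat.eqb_refl. auto. }
  assert (Vl : coord_vec2 k l c1 c2 l = c2).
  { unfold coord_vec2. rewrite (proj2 (Nat.eqb_neq l k)), Nat.eqb_refl; auto. }
  assert (Vo : forall a, a <> k -> a <> l -> coord_vec2 k l c1 c2 a = C0).
  { intros a H1 H2. unfold coord_vec2.
    rewrite (proj2 (Nat.eqb_neq a k)), (proj2 (Nat.eqb_neq a l)); auto. }
  rewrite (Csum_two d k l); auto.
  - rewrite !(Csum_two d k l); auto; try (intros j _ H1 H2; rewrite (Vo j) by auto; cring).
    rewrite Vk, Vl. auto.
  - intros i _ H1 H2. apply Csum_zero. intros j _. rewrite (Vo i) by auto. cring.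
Qed.

(* Positivity on the test vectors e_k, e_k + c e_l with c = 1, -1, i, -i. *)
Lemma psd_entry_bound d B k l : psd d B -> (k < d)%nat -> (l < d)%nat ->
  Rabs (Re (B k l)) <= Re (trace d B) /\ Rabs (Im (B k l)) <= Re (trace d B).
Proof.
  intros HB Hk Hl.
  assert (Hdiag : forall i, (i < d)%nat -> Im (B i i) = 0 /\ 0 <= Re (B i i)).
  { intros i Hi. pose proof (psd_quad_form d B (coord_vec i C1) HB) as H.
    rewrite quad_form_coord_vec in H by auto. revert H. Cunfold. intros [H1 H2]. split; lra. }
  assert (Htr : forall i, (i < d)%nat -> Re (B i i) <= Re (trace d B)).
  { intros i Hi. unfold trace. rewrite Re_Csum.
    apply (Rsum_term d (fun i => Re (B i i))); auto. intros; apply Hdiag; auto. }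
  destruct (Nat.eq_dec k l) as [<-|Hkl].
  - destruct (Hdiag k Hk) as [-> Hre]. rewrite Rabs_R0, Rabs_right by lra.
    pose proof (Htr k Hk). lra.
  - pose proof (Hdiag k Hk). pose proof (Hdiag l Hl). pose proof (Htr k Hk). pose proof (Htr l Hl).
    pose proof (psd_quad_form d B (coord_vec2 k l C1 C1) HB) as Q1.
    pose proof (psd_quad_form d B (coord_vec2 k l C1 (mkC (-1) 0)) HB) as Q2.
    pose proof (psd_quad_form d B (coord_vec2 k l C1 (mkC 0 1)) HB) as Q3.
    pose proof (psd_quad_form d B (coord_vec2 k l C1 (mkC 0 (-1))) HB) as Q4.
    rewrite quad_form_coord_vec2 in Q1, Q2, Q3, Q4 by auto.
    revert Q1 Q2 Q3 Q4. Cunfold.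
    destruct (B k l) as [x y], (B l k) as [x' y'], (B k k) as [p p'], (B l l) as [r r'].
    simpl in *. intros. unfold Rabs. destruct (Rcase_abs x), (Rcase_abs y); split; lra.
Qed.

Definition Emat (i j : nat) : Mat := fun a b => Cmul (delta a i) (delta b j).
Definition Madd (A B : Mat) : Mat := fun a b => Cadd (A a b) (B a b).
Definition Mscal (c : C) (A : Mat) : Mat := fun a b => Cmul c (A a b).

Lemma apply_Emat d K i j k l : (i < d)%nat -> (j < d)%nat -> apply d K (Emat i j) k l = K k l i j.
Proof.
  intros Hi Hj. unfold apply, Emat. rewrite (Csum_single d i); auto.
  - rewrite (Csum_single d j); auto.
    + rewrite !delta_refl. cring.
    + intros b _ Hb. rewrite (delta_neq b j) by auto. cring.
  - intros a _ Ha. apply Csum_zero. intros b _. rewrite (delta_neq a i) by auto. cring.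
Qed.

Lemma apply_Madd d K A B k l :
  apply d K (Madd A B) k l = Cadd (apply d K A k l) (apply d K B k l).
Proof.
  unfold apply, Madd. rewrite <- Csum_add. apply Csum_ext; intros. rewrite <- Csum_add.
  apply Csum_ext; intros. cring.
Qed.

Lemma apply_Mscal d K c A k l : apply d K (Mscal c A) k l = Cmul c (apply d K A k l).
Proof.
  unfold apply, Mscal. rewrite Csum_scal_l. apply Csum_ext; intros. rewrite Csum_scal_l.
  apply Csum_ext; intros. cring.
Qed.

Lemma quad_form_Madd d A B v : quad_form d (Madd A B) v = Cadd (quad_form d A v) (quad_form d B v).
Proof.
  unfold quad_form, Madd. rewrite <- Csum_add. apply Csum_ext; intros. rewrite <- Csum_add.
  apply Csum_ext; intros. cring.
Qed.

Lemma quad_form_Mscal d c A v : quad_form d (Mscal c A) v = Cmul c (quad_form d A v).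
Proof.
  unfold quad_form, Mscal. rewrite Csum_scal_l. apply Csum_ext; intros. rewrite Csum_scal_l.
  apply Csum_ext; intros. cring.
Qed.

Lemma quad_form_Emat d i j v : (i < d)%nat -> (j < d)%nat ->
  quad_form d (Emat i j) v = Cmul (Cconj (v i)) (v j).
Proof.
  intros Hi Hj. unfold quad_form, Emat. rewrite (Csum_single d i); auto.
  - rewrite (Csum_single d j); auto.
    + rewrite !delta_refl. cring.
    + intros b _ Hb. rewrite (delta_neq b j) by auto. cring.
  - intros a _ Ha. apply Csum_zero. intros b _. rewrite (delta_neq a i) by auto. cring.
Qed.

Lemma trace_Madd d A B : trace d (Madd A B) = Cadd (trace d A) (trace d B).
Proof. apply Csum_add. Qed.

Lemma trace_Mscal d c A : trace d (Mscal c A) = Cmul c (trace d A).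
Proof. unfold trace, Mscal. rewrite Csum_scal_l. auto. Qed.

Lemma trace_Emat d i j : (i < d)%nat -> trace d (Emat i j) = delta i j.
Proof.
  intros Hi. unfold trace, Emat. rewrite (Csum_single d i); auto.
  - rewrite delta_refl. cring.
  - intros a _ Ha. rewrite (delta_neq a i) by auto. cring.
Qed.

(* The rank-one projections (e_i + e_j)(e_i + e_j)^* and (e_i + i e_j)(e_i + i e_j)^*. *)
Definition proj_sum i j : Mat :=
  Madd (Madd (Emat i i) (Emat j j)) (Madd (Emat i j) (Emat j i)).
Definition proj_isum i j : Mat :=
  Madd (Madd (Emat i i) (Emat j j))
       (Madd (Mscal (mkC 0 (-1)) (Emat i j)) (Mscal (mkC 0 1) (Emat j i))).

Ltac sum_of_squares x y :=
  match goal with |- 0 <= ?e => replace e with (x * x + y * y) by ring end;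
  pose proof (Rle_0_sqr x); pose proof (Rle_0_sqr y); unfold Rsqr in *; lra.

Lemma psd_Emat_diag d i : (i < d)%nat -> psd d (Emat i i).
Proof.
  intros Hi v. change (Im (quad_form d (Emat i i) v) = 0 /\ 0 <= Re (quad_form d (Emat i i) v)).
  rewrite quad_form_Emat by auto. Cunfold. destruct (v i) as [a1 a2]; simpl.
  split; [ring | sum_of_squares a1 a2].
Qed.

Lemma psd_proj_sum d i j : (i < d)%nat -> (j < d)%nat -> psd d (proj_sum i j).
Proof.
  intros Hi Hj v.
  change (Im (quad_form d (proj_sum i j) v) = 0 /\ 0 <= Re (quad_form d (proj_sum i j) v)).
  unfold proj_sum. rewrite !quad_form_Madd, !quad_form_Emat by auto. Cunfold.
  destruct (v i) as [a1 a2], (v j) as [b1 b2]; simpl.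
  split; [ring | sum_of_squares (a1 + b1) (a2 + b2)].
Qed.

Lemma psd_proj_isum d i j : (i < d)%nat -> (j < d)%nat -> psd d (proj_isum i j).
Proof.
  intros Hi Hj v.
  change (Im (quad_form d (proj_isum i j) v) = 0 /\ 0 <= Re (quad_form d (proj_isum i j) v)).
  unfold proj_isum. rewrite !quad_form_Madd, !quad_form_Mscal, !quad_form_Emat by auto. Cunfold.
  destruct (v i) as [a1 a2], (v j) as [b1 b2]; simpl.
  split; [ring | sum_of_squares (a1 + b2) (a2 - b1)].
Qed.

(* K_{klij} is recovered from the images of the four positive matrices E_ii, E_jj,
   proj_sum i j and proj_isum i j, whose traces are at most 2. *)
Lemma positive_tp_entry_bound d K k l i j : positive_tp d K ->
  (k < d)%nat -> (l < d)%nat -> (i < d)%nat -> (j < d)%nat -> Cnorm1 (K k l i j) <= 8.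
Proof.
  intros [HKp HKt] Hk Hl Hi Hj.
  assert (HB : forall A, psd d A -> Rabs (Re (apply d K A k l)) <= Re (trace d A) /\
                                    Rabs (Im (apply d K A k l)) <= Re (trace d A)).
  { intros A HA. rewrite <- (HKt A). apply psd_entry_bound; auto. }
  unfold Cnorm1.
  destruct (Nat.eq_dec i j) as [<-|Hij].
  - pose proof (HB _ (psd_Emat_diag d i Hi)) as H.
    rewrite apply_Emat, trace_Emat, delta_refl in H by auto. simpl in H. lra.
  - pose proof (HB _ (psd_proj_sum d i j Hi Hj)) as B1.
    pose proof (HB _ (psd_proj_isum d i j Hi Hj)) as B2.
    pose proof (HB _ (psd_Emat_diag d i Hi)) as B3.
    pose proof (HB _ (psd_Emat_diag d j Hj)) as B4.
    unfold proj_sum, proj_isum in *.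
    rewrite !trace_Madd, !trace_Mscal, !trace_Emat, !delta_refl, !delta_neq in * by auto.
    rewrite !apply_Madd, !apply_Mscal, !apply_Emat in * by auto.
    revert B1 B2 B3 B4. Cunfold.
    destruct (K k l i j) as [x y], (K k l j i) as [x' y'], (K k l i i) as [p p'],
      (K k l j j) as [r r']. simpl.
    unfold Rabs. repeat destruct Rcase_abs; intros; lra.
Qed.

Definition superop_close d (K K' : Superop) (r : R) : Prop :=
  forall k l i j, (k < d)%nat -> (l < d)%nat -> (i < d)%nat -> (j < d)%nat ->
    Cnorm1 (Csub (K k l i j) (K' k l i j)) <= r.

Lemma superop_close_refl d K : superop_close d K K 0.
Proof. intros k l i j _ _ _ _. unfold Cnorm1; simpl. rewrite !Rminus_diag, Rabs_R0. lra. Qed.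

Lemma Cnorm1_apply_sub d K K' A r k l : (k < d)%nat -> (l < d)%nat -> superop_close d K K' r ->
  Cnorm1 (Csub (apply d K A k l) (apply d K' A k l)) <=
  r * Rsum d (fun i => Rsum d (fun j => Cnorm1 (A i j))).
Proof.
  intros Hk Hl Hc. unfold apply. eapply Rle_trans; [apply Cnorm1_Csum_sub|].
  rewrite <- Rsum_scal. apply Rsum_le. intros i Hi.
  eapply Rle_trans; [apply Cnorm1_Csum_sub|]. rewrite <- Rsum_scal. apply Rsum_le. intros j Hj.
  replace (Csub (Cmul (K k l i j) (A i j)) (Cmul (K' k l i j) (A i j)))
    with (Cmul (Csub (K k l i j) (K' k l i j)) (A i j)) by cring.
  eapply Rle_trans; [apply Cnorm1_mul|].
  apply Rmult_le_compat_r; [apply Cnorm1_ge0 | apply Hc; auto].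
Qed.

Lemma quad_form_apply_lipschitz d A v : exists c, forall K K' r, 0 <= r -> superop_close d K K' r ->
  Cnorm1 (Csub (quad_form d (apply d K A) v) (quad_form d (apply d K' A) v)) <= r * c.
Proof.
  set (S := Rsum d (fun i => Rsum d (fun j => Cnorm1 (A i j)))).
  exists (Rsum d (fun k => Rsum d (fun l => Cnorm1 (v k) * (S * Cnorm1 (v l))))).
  intros K K' r Hr Hc. unfold quad_form. eapply Rle_trans; [apply Cnorm1_Csum_sub|].
  rewrite <- Rsum_scal. apply Rsum_le. intros k Hk.
  eapply Rle_trans; [apply Cnorm1_Csum_sub|]. rewrite <- Rsum_scal. apply Rsum_le. intros l Hl.
  set (D := Csub (apply d K A k l) (apply d K' A k l)).
  replace (Csub (Cmul (Cconj (v k)) (Cmul (apply d K A k l) (v l)))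
                (Cmul (Cconj (v k)) (Cmul (apply d K' A k l) (v l))))
    with (Cmul (Cconj (v k)) (Cmul D (v l))) by (unfold D; cring).
  pose proof (Cnorm1_ge0 (v k)). pose proof (Cnorm1_ge0 (v l)). pose proof (Cnorm1_ge0 D).
  pose proof (Cnorm1_apply_sub d K K' A r k l Hk Hl Hc) as HD. fold S D in HD.
  pose proof (Cnorm1_mul (Cconj (v k)) (Cmul D (v l))). pose proof (Cnorm1_mul D (v l)).
  rewrite Cnorm1_Cconj in *.
  assert (Cnorm1 D * Cnorm1 (v l) <= r * S * Cnorm1 (v l)) by (apply Rmult_le_compat_r; auto).
  assert (Cnorm1 (v k) * Cnorm1 (Cmul D (v l)) <= Cnorm1 (v k) * (r * S * Cnorm1 (v l)))
    by (apply Rmult_le_compat_l; lra).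
  nra.
Qed.

Lemma trace_apply_lipschitz d A : exists c, forall K K' r, 0 <= r -> superop_close d K K' r ->
  Cnorm1 (Csub (trace d (apply d K A)) (trace d (apply d K' A))) <= r * c.
Proof.
  set (S := Rsum d (fun i => Rsum d (fun j => Cnorm1 (A i j)))).
  exists (Rsum d (fun _ => S)). intros K K' r Hr Hc. unfold trace.
  eapply Rle_trans; [apply Cnorm1_Csum_sub|]. rewrite <- Rsum_scal. apply Rsum_le. intros k Hk.
  apply Cnorm1_apply_sub; auto.
Qed.

(* Positivity and trace preservation are closed conditions: both are tested on
   quantities that depend Lipschitz-continuously on the map. *)
Lemma positive_tp_closed d M :
  (forall eps, 0 < eps -> exists K, superop_close d K M eps /\ positive_tp d K) ->
  positive_tp d M.
Proof.
  intros Happrox. split.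
  - intros A HA v.
    change (Im (quad_form d (apply d M A) v) = 0 /\ 0 <= Re (quad_form d (apply d M A) v)).
    destruct (quad_form_apply_lipschitz d A v) as [c Hc].
    assert (Hsmall : forall r, 0 < r ->
      Rabs (Im (quad_form d (apply d M A) v)) <= r * c /\
      - Re (quad_form d (apply d M A) v) <= r * c).
    { intros r Hr. destruct (Happrox r Hr) as [K [HKM [HKp _]]].
      destruct (psd_quad_form d _ v (HKp A HA)) as [HIm HRe].
      pose proof (Hc K M r ltac:(lra) HKM) as Hd.
      pose proof (Rabs_Re_le_Cnorm1 (Csub (quad_form d (apply d K A) v)
                                          (quad_form d (apply d M A) v))) as H1.
      pose proof (Rabs_Im_le_Cnorm1 (Csub (quad_form d (apply d K A) v)
                                          (quad_form d (apply d M A) v))) as H2.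
      simpl in H1, H2. rewrite HIm, Rminus_0_l, Rabs_Ropp in H2.
      pose proof (Rle_abs (Re (quad_form d (apply d K A) v) - Re (quad_form d (apply d M A) v))).
      split; lra. }
    pose proof (Rle0_of_small _ _ (fun r Hr => proj1 (Hsmall r Hr))) as HIm.
    pose proof (Rle0_of_small _ _ (fun r Hr => proj2 (Hsmall r Hr))) as HRe.
    split; [|lra].
    apply cond_eq. intros eps He. rewrite Rminus_0_r. lra.
  - intros A. destruct (trace_apply_lipschitz d A) as [c Hc].
    apply Cnorm1_Csub_le0, (Rle0_of_small _ c). intros r Hr.
    destruct (Happrox r Hr) as [K [HKM [_ HKt]]].
    rewrite <- (HKt A), Cnorm1_Csub_sym. apply Hc; auto; lra.
Qed.

Lemma compose_close d A A' B B' c r1 r2 :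
  superop_close d A A' r1 -> superop_close d B B' r2 ->
  (forall k l i j, (k < d)%nat -> (l < d)%nat -> (i < d)%nat -> (j < d)%nat ->
     Cnorm1 (B k l i j) <= c /\ Cnorm1 (A' k l i j) <= c) ->
  0 <= r1 -> 0 <= c ->
  superop_close d (compose d A B) (compose d A' B') (INR d * (INR d * (c * (r1 + r2)))).
Proof.
  intros HA HB Hc Hr1 Hc0 k l i j Hk Hl Hi Hj. unfold compose.
  eapply Rle_trans; [apply Cnorm1_Csum_sub|]. rewrite <- Rsum_const.
  apply Rsum_le. intros p Hp.
  eapply Rle_trans; [apply Cnorm1_Csum_sub|]. rewrite <- Rsum_const.
  apply Rsum_le. intros q Hq.
  replace (Csub (Cmul (A k l p q) (B p q i j)) (Cmul (A' k l p q) (B' p q i j))) with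
    (Cadd (Cmul (Csub (A k l p q) (A' k l p q)) (B p q i j))
          (Cmul (A' k l p q) (Csub (B p q i j) (B' p q i j)))) by cring.
  eapply Rle_trans; [apply Cnorm1_add|].
  pose proof (Cnorm1_mul (Csub (A k l p q) (A' k l p q)) (B p q i j)).
  pose proof (Cnorm1_mul (A' k l p q) (Csub (B p q i j) (B' p q i j))).
  pose proof (HA k l p q Hk Hl Hp Hq). pose proof (HB p q i j Hp Hq Hi Hj).
  destruct (Hc p q i j Hp Hq Hi Hj) as [HcB _]. destruct (Hc k l p q Hk Hl Hp Hq) as [_ HcA].
  pose proof (Cnorm1_ge0 (B p q i j)). pose proof (Cnorm1_ge0 (A' k l p q)).
  pose proof (Cnorm1_ge0 (Csub (A k l p q) (A' k l p q))).
  pose proof (Cnorm1_ge0 (Csub (B p q i j) (B' p q i j))).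
  assert (Cnorm1 (Csub (A k l p q) (A' k l p q)) * Cnorm1 (B p q i j) <= r1 * c)
    by (apply Rmult_le_compat; auto).
  assert (Cnorm1 (A' k l p q) * Cnorm1 (Csub (B p q i j) (B' p q i j)) <= c * r2)
    by (apply Rmult_le_compat; auto).
  lra.
Qed.

(** * Entanglement breaking is stable under post-composition *)

Lemma entanglement_breaking_ext d L L' :
  (forall k l i j, (k < d)%nat -> (l < d)%nat -> (i < d)%nat -> (j < d)%nat ->
     L k l i j = L' k l i j) ->
  entanglement_breaking d L -> entanglement_breaking d L'.
Proof.
  intros H HL m X HX. destruct (HL m X HX) as [n [p [rho [sigma [Hst [Hsum Heq]]]]]].
  exists n, p, rho, sigma. split; [auto|split; auto].
  intros a al b be Ha Hal Hb Hbe. rewrite <- Heq; auto. unfold apply_tensor_id.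
  apply Csum_ext; intros i Hi. apply Csum_ext; intros j Hj. rewrite H; auto.
Qed.

Lemma apply_tensor_id_product_sum d n M (p : nat -> R) (rho : nat -> Mat) (s : nat -> C) a b :
  Csum d (fun i => Csum d (fun j =>
    Cmul (M a b i j) (Csum n (fun t => Cmul (RtoC (p t)) (Cmul (rho t i j) (s t))))))
  = Csum n (fun t => Cmul (RtoC (p t)) (Cmul (apply d M (rho t) a b) (s t))).
Proof.
  set (F := fun i j t => Cmul (RtoC (p t)) (Cmul (Cmul (M a b i j) (rho t i j)) (s t))).
  transitivity (Csum d (fun i => Csum d (fun j => Csum n (F i j)))).
  { apply Csum_ext; intros i _. apply Csum_ext; intros j _. rewrite Csum_scal_l.
    apply Csum_ext; intros t _. unfold F. cring. }
  transitivity (Csum n (fun t => Csum d (fun i => Csum d (fun j => F i j t)))).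
  { transitivity (Csum d (fun i => Csum n (fun t => Csum d (fun j => F i j t)))).
    - apply Csum_ext; intros i _. apply Csum_swap.
    - apply Csum_swap. }
  apply Csum_ext; intros t _. unfold apply, F.
  rewrite Csum_scal_r, Csum_scal_l. apply Csum_ext; intros i _.
  rewrite Csum_scal_r, Csum_scal_l. auto.
Qed.

Lemma entanglement_breaking_compose d M L : positive_tp d M ->
  entanglement_breaking d L -> entanglement_breaking d (compose d M L).
Proof.
  intros [HMp HMt] HL m X HX. destruct (HL m X HX) as [n [p [rho [sigma [Hst [Hsum Heq]]]]]].
  exists n, p, (fun t => apply d M (rho t)), sigma. split; [|split; auto].
  - intros t Ht. destruct (Hst t Ht) as [Hp [[Hr1 Hr2] Hs]].
    split; [|split; [split; [apply HMp; auto | rewrite HMt; auto] | auto]]; auto.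
  - intros a al b be Ha Hal Hb Hbe. rewrite apply_tensor_id_compose.
    unfold apply_tensor_id at 1. rewrite <- apply_tensor_id_product_sum.
    apply Csum_ext; intros i Hi. apply Csum_ext; intros j Hj. rewrite Heq; auto.
Qed.

(** * Bolzano-Weierstrass for sequences of superoperators *)

Lemma Rseq_cluster_point (u : nat -> R) (B : R) : (forall t, Rabs (u t) <= B) ->
  exists L, forall eps, 0 < eps -> forall N, exists p, (N <= p)%nat /\ Rabs (u p - L) < eps.
Proof.
  intros Hb.
  destruct (Bolzano_Weierstrass u (fun c => -B <= c <= B) (compact_P3 _ _)) as [L HL].
  { intro n. specialize (Hb n). revert Hb; unfold Rabs; destruct Rcase_abs; lra. }
  exists L. intros eps He N.
  destruct (HL (disc L (mkposreal eps He)) N) as [p [Hp Hv]].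
  { exists (mkposreal eps He). intros y Hy; exact Hy. }
  exists p. split; auto.
Qed.

Lemma Rseq_convergent_subseq (u : nat -> R) (B : R) : (forall t, Rabs (u t) <= B) ->
  exists (tau : nat -> nat) (L : R), (forall t, (tau t < tau (S t))%nat) /\
   forall eps, 0 < eps -> exists T, forall t, (T <= t)%nat -> Rabs (u (tau t) - L) < eps.
Proof.
  intros Hb. destruct (Rseq_cluster_point u B Hb) as [L HL].
  assert (Hg : forall N, exists h : nat -> nat,
            forall t, (N <= h t)%nat /\ Rabs (u (h t) - L) < / INR (S t)).
  { intros N. apply (choice (fun t p => (N <= p)%nat /\ Rabs (u p - L) < / INR (S t))).
    intros t. apply HL, inv_pos. }
  destruct (choice _ Hg) as [g Hgp].
  exists (fix tau t := match t with O => g O O | S t' => g (S (tau t')) (S t') end), L.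
  split.
  - intro t. match goal with |- (?a < _)%nat => destruct (Hgp (S a) (S t)) end. simpl. lia.
  - intros eps He. destruct (inv_small eps He) as [T HT]. exists T. intros t Ht.
    specialize (HT t Ht).
    destruct t as [|t]; [destruct (Hgp O O) | match goal with |- context [g ?a ?b] =>
      destruct (Hgp a b) end]; simpl; lra.
Qed.

Lemma strictly_increasing_ge (sg : nat -> nat) :
  (forall t, (sg t < sg (S t))%nat) -> forall t, (t <= sg t)%nat.
Proof. intros Hsg t. induction t; [lia|]. specialize (Hsg t). lia. Qed.

Lemma strictly_increasing_lt (sg : nat -> nat) :
  (forall t, (sg t < sg (S t))%nat) -> forall a b, (a < b)%nat -> (sg a < sg b)%nat.
Proof. intros Hsg a b Hab. induction Hab; [apply Hsg|]. specialize (Hsg m). lia. Qed.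

(* Extract successive subsequences, one coordinate at a time. *)
Lemma Rseq_family_convergent_subseq (I : Type) (f : I -> nat -> R) (B : R) (l : list I) :
  (forall x t, In x l -> Rabs (f x t) <= B) ->
  exists (sg : nat -> nat) (g : I -> R), (forall t, (sg t < sg (S t))%nat) /\
   forall eps, 0 < eps -> exists T, forall t, (T <= t)%nat -> forall x, In x l ->
     Rabs (f x (sg t) - g x) < eps.
Proof.
  induction l as [|x l IH]; intros Hb.
  - exists (fun t => t), (fun _ => 0). split; [intro; lia|].
    intros eps He. exists O. intros t _ x [].
  - destruct IH as [sg [g [Hsg Hc]]]. { intros y t Hy. apply Hb. right; auto. }
    destruct (Rseq_convergent_subseq (fun t => f x (sg t)) B) as [tau [L [Htau Hl]]].
    { intro t. apply Hb. left; auto. }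
    exists (fun t => sg (tau t)),
      (fun y => if excluded_middle_informative (y = x) then L else g y).
    split.
    + intro t. apply strictly_increasing_lt, Htau. exact Hsg.
    + intros eps He. destruct (Hc eps He) as [T1 H1]. destruct (Hl eps He) as [T2 H2].
      exists (Nat.max T1 T2). intros t Ht y Hy.
      destruct (excluded_middle_informative (y = x)) as [->|Hne].
      * apply H2. lia.
      * destruct Hy as [Hy|Hy]; [congruence|]. apply H1; auto.
        pose proof (strictly_increasing_ge tau Htau t). lia.
Qed.

(* Real and imaginary parts of all entries K k l i j with indices < d. *)
Definition superop_coords d : list (nat * nat * nat * nat * bool) :=
  flat_map (fun k => flat_map (fun l => flat_map (fun i => flat_map (fun j =>
    (k, l, i, j, true) :: (k, l, i, j, false) :: nil) (seq 0 d)) (seq 0 d)) (seq 0 d)) (seq 0 d).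

Lemma In_superop_coords d k l i j b : (k < d)%nat -> (l < d)%nat -> (i < d)%nat -> (j < d)%nat ->
  In (k, l, i, j, b) (superop_coords d).
Proof.
  intros. unfold superop_coords.
  apply in_flat_map. exists k. split; [apply in_seq; lia|].
  apply in_flat_map. exists l. split; [apply in_seq; lia|].
  apply in_flat_map. exists i. split; [apply in_seq; lia|].
  apply in_flat_map. exists j. split; [apply in_seq; lia|].
  destruct b; simpl; auto.
Qed.

Lemma In_superop_coords_inv d k l i j b : In (k, l, i, j, b) (superop_coords d) ->
  (k < d)%nat /\ (l < d)%nat /\ (i < d)%nat /\ (j < d)%nat.
Proof.
  unfold superop_coords. intros H.
  apply in_flat_map in H. destruct H as [k' [Hk H]].
  apply in_flat_map in H. destruct H as [l' [Hl H]].
  apply in_flat_map in H. destruct H as [i' [Hi H]].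
  apply in_flat_map in H. destruct H as [j' [Hj H]].
  apply in_seq in Hk, Hl, Hi, Hj.
  simpl in H. destruct H as [H|[H|[]]]; inversion H; subst; lia.
Qed.

Lemma superop_seq_convergent_subseq d (P : nat -> Superop) (B : R) :
  (forall t k l i j, (k < d)%nat -> (l < d)%nat -> (i < d)%nat -> (j < d)%nat ->
     Cnorm1 (P t k l i j) <= B) ->
  exists (sg : nat -> nat) (M : Superop), (forall t, (sg t < sg (S t))%nat) /\
    forall eps, 0 < eps -> exists T, forall t, (T <= t)%nat -> superop_close d (P (sg t)) M eps.
Proof.
  intros Hb.
  set (f := fun (x : nat * nat * nat * nat * bool) t =>
    let '(k, l, i, j, b) := x in if b then Re (P t k l i j) else Im (P t k l i j)).
  destruct (Rseq_family_convergent_subseq _ f B (superop_coords d)) as [sg [g [Hsg Hconv]]].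
  { intros [[[[k l] i] j] b] t Hin. apply In_superop_coords_inv in Hin.
    destruct Hin as [Hk [Hl [Hi Hj]]]. pose proof (Hb t k l i j Hk Hl Hi Hj).
    pose proof (Rabs_Re_le_Cnorm1 (P t k l i j)). pose proof (Rabs_Im_le_Cnorm1 (P t k l i j)).
    destruct b; simpl; lra. }
  exists sg, (fun k l i j => mkC (g (k, l, i, j, true)) (g (k, l, i, j, false))).
  split; auto.
  intros eps He. destruct (Hconv (eps / 2) ltac:(lra)) as [T HT].
  exists T. intros t Ht k l i j Hk Hl Hi Hj.
  pose proof (HT t Ht _ (In_superop_coords d k l i j true Hk Hl Hi Hj)).
  pose proof (HT t Ht _ (In_superop_coords d k l i j false Hk Hl Hi Hj)).
  unfold Cnorm1; simpl in *. lra.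
Qed.

(** * Limit points of the powers *)

Lemma limit_point_seq d phi L (f : nat -> nat) : limit_point d phi L ->
  exists n : nat -> nat, forall k, (f k <= n k)%nat /\
    superop_close d (power d phi (n k)) L (/ INR (S k)).
Proof.
  intros HL.
  apply (choice (fun k n => (f k <= n)%nat /\ superop_close d (power d phi n) L (/ INR (S k)))).
  intros k. pose proof (inv_pos k).
  destruct (HL (/ INR (S k) / 2) ltac:(lra) (f k)) as [n [Hn Hc]].
  exists n. split; auto. intros k' l i j Hk Hl Hi Hj.
  pose proof (Hc k' l i j Hk Hl Hi Hj).
  pose proof (Cnorm1_le_Cmod (Csub (power d phi n k' l i j) (L k' l i j))). lra.
Qed.

Lemma Cnorm1_Csub_split x y z w :
  Cnorm1 (Csub x w) <= Cnorm1 (Csub x y) + Cnorm1 (Csub y z) + Cnorm1 (Csub z w).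
Proof.
  replace (Csub x w) with (Cadd (Csub x y) (Cadd (Csub y z) (Csub z w))) by cring.
  pose proof (Cnorm1_add (Csub x y) (Cadd (Csub y z) (Csub z w))).
  pose proof (Cnorm1_add (Csub y z) (Csub z w)). lra.
Qed.

Lemma limit_points_factor d phi L1 L2 : quantum_channel d phi ->
  limit_point d phi L1 -> limit_point d phi L2 ->
  exists M, positive_tp d M /\
    forall k l i j, (k < d)%nat -> (l < d)%nat -> (i < d)%nat -> (j < d)%nat ->
      L2 k l i j = compose d M L1 k l i j.
Proof.
  intros Hq H1 H2.
  destruct (limit_point_seq d phi L1 (fun k => k) H1) as [n Hn].
  destruct (limit_point_seq d phi L2 n H2) as [m Hm].
  set (P := fun t => power d phi (m t - n t)).
  assert (Hbound : forall N k l i j, (k < d)%nat -> (l < d)%nat -> (i < d)%nat -> (j < d)%nat ->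
            Cnorm1 (power d phi N k l i j) <= 8).
  { intros. apply (positive_tp_entry_bound d); auto. apply power_positive_tp; auto. }
  destruct (superop_seq_convergent_subseq d P 8) as [sg [M [Hsg HPM]]].
  { intros t. apply Hbound. }
  assert (HM : positive_tp d M).
  { apply positive_tp_closed. intros eps He. destruct (HPM eps He) as [T HT].
    exists (P (sg T)). split; [apply HT; lia | apply power_positive_tp; auto]. }
  exists M. split; auto. intros k l i j Hk Hl Hi Hj.
  symmetry. apply Cnorm1_Csub_le0, (Rle0_of_small _ (1 + 16 * (INR d * INR d))).
  intros r Hr.
  destruct (HPM r Hr) as [T1 HT1]. destruct (inv_small r Hr) as [T2 HT2].
  set (a := sg (Nat.max T1 T2)).
  pose proof (strictly_increasing_ge sg Hsg (Nat.max T1 T2)).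
  assert (Hra : / INR (S a) <= r) by (apply HT2; unfold a; lia).
  assert (HPa : superop_close d (P a) M r) by exact (HT1 _ (Nat.le_max_l T1 T2)).
  destruct (Hn a) as [_ Hna]. destruct (Hm a) as [Hnma Hma].
  assert (Hc : forall k l i j, (k < d)%nat -> (l < d)%nat -> (i < d)%nat -> (j < d)%nat ->
            Cnorm1 (power d phi (n a) k l i j) <= 8 /\ Cnorm1 (M k l i j) <= 8).
  { intros. split; [apply Hbound | apply (positive_tp_entry_bound d)]; auto. }
  pose proof (compose_close d M M _ _ 8 0 _ (superop_close_refl d M) Hna Hc
                ltac:(lra) ltac:(lra) k l i j Hk Hl Hi Hj) as E1.
  pose proof (compose_close d (P a) M _ _ 8 r 0 HPa (superop_close_refl d _) Hc
                ltac:(lra) ltac:(lra) k l i j Hk Hl Hi Hj) as E2.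
  pose proof (Hma k l i j Hk Hl Hi Hj) as E3.
  assert (Hpow : power d phi (m a) k l i j = compose d (P a) (power d phi (n a)) k l i j).
  { unfold P. rewrite <- power_add by auto. f_equal. lia. }
  rewrite <- Hpow in E2. rewrite Cnorm1_Csub_sym in E1, E2.
  pose proof (Cnorm1_Csub_split (compose d M L1 k l i j) (compose d M (power d phi (n a)) k l i j)
                (power d phi (m a) k l i j) (L2 k l i j)).
  pose proof (inv_pos a). pose proof (pos_INR d).
  assert (INR d * INR d * 8 * / INR (S a) <= INR d * INR d * 8 * r)
    by (apply Rmult_le_compat_l; [nra | lra]).
  nra.
Qed.

Theorem mainTheorem14 (d : nat) (phi : Superop) (Hphi : quantum_channel d phi) :
  (forall psi : Superop, limit_point d phi psi -> entanglement_breaking d psi) \/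
  (forall psi : Superop, limit_point d phi psi -> ~ entanglement_breaking d psi).
Proof.
  destruct (classic (exists psi, limit_point d phi psi /\ entanglement_breaking d psi))
    as [[L1 [H1 HEB]] | Hnone].
  - left. intros L2 H2.
    destruct (limit_points_factor d phi L1 L2 Hphi H1 H2) as [M [HM HL2]].
    apply (entanglement_breaking_ext d (compose d M L1)).
    + intros. symmetry. auto.
    + apply entanglement_breaking_compose; auto.
  - right. intros psi Hpsi HEB. apply Hnone. exists psi. auto.
Qed.
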